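(* Let $\bar F^a,\bar F^b,\bar F^c:\mathbb{R}^n\times\mathbb{R}^q\times\mathbb{R}_{>0}\to\mathbb{R}^n$ be closed-loop discrete-time models. If the pairs $(\bar F^a,\bar F^b)$ and $(\bar F^b,\bar F^c)$ are REPC, then the pair $(\bar F^a,\bar F^c)$ is REPC.
   Context: $\mathcal{K}_\infty$: continuous, strictly increasing, unbounded functions $\mathbb{R}_{\ge0}\to\mathbb{R}_{\ge0}$ vanishing at $0$. REPC: $\bar F^a$ is Robustly Equilibrium-Preserving Consistent with $\bar F^b$ (the pair $(\bar F^a,\bar F^b)$ is REPC) if there exists $\phi\in\mathcal{K}_\infty$ such that for each $M,E\ge0$ there exist constants $K=K(M,E)>0$, $T^*=T^*(M,E)>0$ and a function $\rho\in\mathcal{K}_\infty$ such that $|\bar F^a(x^a,e,T)-\bar F^b(x^b,e,T)|\le(1+KT)|x^a-x^b|+T\rho(T)(\max\{|x^a|,|x^b|\}+\phi(|e|))$ for all $|x^a|,|x^b|\le M$, $|e|\le E$ and $T\in(0,T^* )$. *)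

From HB Require Import structures.
From mathcomp Require Import all_boot all_order all_algebra.
From mathcomp Require Import all_classical all_reals all_analysis.
Set Implicit Arguments. Unset Strict Implicit. Unset Printing Implicit Defensive.
Import Order.TTheory GRing.Theory Num.Theory.
Import numFieldNormedType.Exports.
Local Open Scope classical_set_scope.
Local Open Scope ring_scope.

Definition enorm (R : realType) (n : nat) (v : 'rV[R]_n) : R :=
  Num.sqrt (\sum_(i < n) (v ord0 i) ^+ 2).

(* Class K_infinity: functions R_{>=0} -> R_{>=0} (represented as R -> R,
   only values on [0,+oo) matter) that are continuous, strictly increasing,
   unbounded and vanish at 0. *)
Definition K_inf (R : realType) (f : R -> R) : Prop :=
  [/\ {within `[0, +oo[, continuous f},
      (forall x, 0 <= x -> 0 <= f x),
      (forall x y, 0 <= x -> x < y -> f x < f y),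
      (forall B : R, exists x, 0 <= x /\ B < f x)
    & f 0 = 0].

(* Closed-loop discrete-time model  R^n x R^q x R_{>0} -> R^n; represented as
   a function of T : R, only values for T > 0 are ever used. *)
Definition dt_model (R : realType) (n q : nat) :=
  'rV[R]_n -> 'rV[R]_q -> R -> 'rV[R]_n.

Definition REPC (R : realType) (n q : nat) (Fa Fb : dt_model R n q) : Prop :=
  exists phi : R -> R, K_inf phi /\
    forall M E : R, 0 <= M -> 0 <= E ->
      exists K Tstar : R, exists rho : R -> R,
        [/\ 0 < K, 0 < Tstar, K_inf rho &
          forall (xa xb : 'rV[R]_n) (e : 'rV[R]_q) (T : R),
            enorm xa <= M -> enorm xb <= M -> enorm e <= E ->
            0 < T -> T < Tstar ->
            enorm (Fa xa e T - Fb xb e T)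
              <= (1 + K * T) * enorm (xa - xb)
                 + T * rho T * (Num.max (enorm xa) (enorm xb) + phi (enorm e))].

From HB Require Import structures.
From mathcomp Require Import all_boot all_order all_algebra.
From mathcomp Require Import all_classical all_reals all_analysis.
From mathcomp Require Import ring lra.
Set Implicit Arguments. Unset Strict Implicit. Unset Printing Implicit Defensive.
Import Order.TTheory GRing.Theory Num.Theory.
Import numFieldNormedType.Exports.
Local Open Scope ring_scope.

(* Pass through the intermediate value [Fb xc e T]: compare [Fa xa] with
   [Fb xc] by the first estimate, and [Fb xc] with [Fc xc] by the second one
   applied at equal states, where its Lipschitz term vanishes. Adding the two
   errors by the triangle inequality, [phi1 + phi2], [rho1 + rho2], [K1] and
   [min T1 T2] witness the consistency of Fa with Fc. *)

Lemma lagrange_identity (R : comPzRingType) (n : nat) (u v : 'I_n -> R) :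
  \sum_i \sum_j (u i * v j - u j * v i) ^+ 2 =
  2 * ((\sum_i u i ^+ 2) * (\sum_i v i ^+ 2) - (\sum_i u i * v i) ^+ 2).
Proof.
rewrite [RHS](_ : _ = (\sum_i u i ^+ 2) * (\sum_i v i ^+ 2)
                      + (\sum_i v i ^+ 2) * (\sum_i u i ^+ 2)
                      - 2 * ((\sum_i u i * v i) * (\sum_i u i * v i))); last by ring.
rewrite !mulr_suml mulr_sumr -sumrN -!big_split /=.
apply: eq_bigr => i _; rewrite !mulr_sumr -sumrN -!big_split /=.
by apply: eq_bigr => j _; ring.
Qed.

Section CauchySchwarz.
Variables (R : rcfType) (n : nat).
Implicit Types u v : 'I_n -> R.

Lemma sum_sqr_ge0 u : 0 <= \sum_i u i ^+ 2.
Proof. by apply: sumr_ge0 => i _; exact: sqr_ge0. Qed.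

Lemma cauchy_schwarz u v :
  \sum_i u i * v i <= Num.sqrt (\sum_i u i ^+ 2) * Num.sqrt (\sum_i v i ^+ 2).
Proof.
have sqr_le : (\sum_i u i * v i) ^+ 2 <= (\sum_i u i ^+ 2) * (\sum_i v i ^+ 2).
  have : 0 <= \sum_i \sum_j (u i * v j - u j * v i) ^+ 2.
    by apply: sumr_ge0 => i _; exact: sum_sqr_ge0.
  by rewrite lagrange_identity pmulr_rge0 // subr_ge0.
rewrite -sqrtrM ?sum_sqr_ge0 // (le_trans (ler_norm _)) //.
by rewrite -sqrtr_sqr ler_wsqrtr.
Qed.

End CauchySchwarz.

Section EuclideanNorm.
Variables (R : realType) (n : nat).
Implicit Types u v w : 'rV[R]_n.

Lemma enorm_ge0 v : 0 <= enorm v.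
Proof. exact: sqrtr_ge0. Qed.

Lemma enorm0 : enorm (0 : 'rV[R]_n) = 0.
Proof. by rewrite /enorm big1 ?sqrtr0 // => i _; rewrite mxE expr0n. Qed.

Lemma enormD u v : enorm (u + v) <= enorm u + enorm v.
Proof.
have sqr_expand : \sum_i (u + v) ord0 i ^+ 2 =
    \sum_i u ord0 i ^+ 2 + 2 * \sum_i u ord0 i * v ord0 i + \sum_i v ord0 i ^+ 2.
  rewrite mulr_sumr -!big_split /=; apply: eq_bigr => i _; rewrite !mxE; ring.
have CS := cauchy_schwarz (u ord0) (v ord0).
have A_ge0 := sum_sqr_ge0 (u ord0); have B_ge0 := sum_sqr_ge0 (v ord0).
rewrite /enorm sqr_expand.
set A := \sum_i u ord0 i ^+ 2 in CS A_ge0 *; set B := \sum_i v ord0 i ^+ 2 in CS B_ge0 *.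
rewrite -(ger0_norm (addr_ge0 (sqrtr_ge0 A) (sqrtr_ge0 B))) -sqrtr_sqr.
by rewrite ler_wsqrtr // sqrrD !sqr_sqrtr //; lra.
Qed.

Lemma enormB_trans u v w : enorm (u - w) <= enorm (u - v) + enorm (v - w).
Proof.
have -> : u - w = (u - v) + (v - w) by rewrite addrA subrK.
exact: enormD.
Qed.

End EuclideanNorm.

Lemma K_inf_ge0 (R : realType) (f : R -> R) x : K_inf f -> 0 <= x -> 0 <= f x.
Proof. by case=> _ f_ge0 _ _ _; exact: f_ge0. Qed.

Lemma K_infD (R : realType) (f g : R -> R) :
  K_inf f -> K_inf g -> K_inf (fun x => f x + g x).
Proof.
case=> cf f_ge0 f_incr f_unb f0 [cg g_ge0 g_incr g_unb g0]; split.
- by move=> x; apply: cvgD; [exact: cf | exact: cg].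
- by move=> x x_ge0; rewrite addr_ge0 ?f_ge0 ?g_ge0.
- by move=> x y x_ge0 xy; rewrite ltrD ?f_incr ?g_incr.
- move=> B; have [x [x_ge0 Bfx]] := f_unb B; exists x; split => //.
  by rewrite (lt_le_trans Bfx) // lerDl g_ge0.
- by rewrite f0 g0 addr0.
Qed.

Lemma consistency_errorD (R : realDomainType) (T r1 r2 p1 p2 m y : R) :
  0 <= T -> 0 <= r1 -> 0 <= r2 -> 0 <= p1 -> 0 <= p2 -> y <= m ->
  T * r1 * (m + p1) + T * r2 * (y + p2) <= T * (r1 + r2) * (m + (p1 + p2)).
Proof.
move=> T_ge0 r1_ge0 r2_ge0 p1_ge0 p2_ge0 ym.
have gap : T * (r1 + r2) * (m + (p1 + p2)) - (T * r1 * (m + p1) + T * r2 * (y + p2))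
    = T * r1 * p2 + T * r2 * (m - y + p1) by ring.
rewrite -subr_ge0 gap; apply: addr_ge0; apply: mulr_ge0; rewrite ?mulr_ge0 //.
by rewrite addr_ge0 // subr_ge0.
Qed.

Theorem proposition1 (R : realType) (n q : nat) (Fa Fb Fc : dt_model R n q) :
  REPC Fa Fb -> REPC Fb Fc -> REPC Fa Fc.
Proof.
move=> [phi1 [Kphi1 cons1]] [phi2 [Kphi2 cons2]].
exists (fun x => phi1 x + phi2 x); split; first exact: K_infD.
move=> M E M_ge0 E_ge0.
have [K1 [T1 [rho1 [K1_gt0 T1_gt0 Krho1 est1]]]] := cons1 M E M_ge0 E_ge0.
have [K2 [T2 [rho2 [_ T2_gt0 Krho2 est2]]]] := cons2 M E M_ge0 E_ge0.
exists K1, (Num.min T1 T2), (fun x => rho1 x + rho2 x).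
split; [done | by rewrite lt_min T1_gt0 T2_gt0 | exact: K_infD |].
move=> xa xc e T xaM xcM eE T_gt0; rewrite lt_min => /andP[TT1 TT2].
have {est1} := est1 xa xc e T xaM xcM eE T_gt0 TT1.
have {est2} := est2 xc xc e T xcM xcM eE T_gt0 TT2.
rewrite subrr enorm0 mulr0 add0r maxxx => est2 est1.
have e_ge0 := enorm_ge0 e; have T_ge0 := ltW T_gt0.
have xc_le_max : enorm xc <= Num.max (enorm xa) (enorm xc) by rewrite le_max lexx orbT.
apply: (le_trans (enormB_trans _ (Fb xc e T) _)).
apply: (le_trans (lerD est1 est2)); rewrite -addrA lerD2l.
apply: consistency_errorD => //.
- exact: (K_inf_ge0 Krho1).
- exact: (K_inf_ge0 Krho2).
- exact: (K_inf_ge0 Kphi1).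
- exact: (K_inf_ge0 Kphi2).
Qed.
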